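(* Let $A=(a_{i,j})_{i,j\in\llbracket1,n\rrbracket}$ be a generalized Cartan matrix and $(\mathbb A,\Pi,\Pi^\vee)$ a generalized free realization of $A$. Let $W^v_{\mathbb A}$ be the subgroup of $GL(\mathbb A)$ generated by the reflections $r_i(v)=v-\alpha_i(v)\alpha_i^\vee$, and $Q^\vee_{\mathbb A}=\bigoplus_i\mathbb Z\alpha_i^\vee$. Then $W^v_{\mathbb A}$ stabilizes $Q^\vee_{\mathbb A}$ and the restriction map $W^v_{\mathbb A}\to\mathrm{Aut}_{\mathbb Z}(Q^\vee_{\mathbb A})$, $w\mapsto w|_{Q^\vee_{\mathbb A}}$, is injective.
   Context: A generalized Cartan matrix satisfies $a_{i,i}=2$, $a_{i,j}\in\mathbb Z_{\le0}$ for $i\ne j$, $a_{i,j}=0\iff a_{j,i}=0$. A generalized free realization of $A$ is a triple $(\mathbb A,\Pi,\Pi^\vee)$ with $\mathbb A$ a finite-dimensional real vector space, $\Pi=\{\alpha_1,\dots,\alpha_n\}\subset\mathbb A^*$ and $\Pi^\vee=\{\alpha_1^\vee,\dots,\alpha_n^\vee\}\subset\mathbb A$ both linearly independent families of cardinality $n$, with $\alpha_j(\alpha_i^\vee)=a_{i,j}$ for all $i,j$. *)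

(* The real vector space A of dimension m is modelled by
   row vectors 'rV[R]_m over an arbitrary real field R (covers the reals);
   linear forms on A are modelled by row vectors too, via the pairing
   alpha(v) = (v *m alpha^T) 0 0.  Endomorphisms act on the right: v *m w. *)
From HB Require Import structures.
From mathcomp Require Import all_boot all_order all_algebra.
Set Implicit Arguments. Unset Strict Implicit. Unset Printing Implicit Defensive.
Import Order.TTheory GRing.Theory Num.Theory.
Local Open Scope ring_scope.

Definition gen_cartan (n : nat) (A : 'M[int]_n) : Prop :=
  (forall i, A i i = 2) /\
  (forall i j, i != j -> A i j <= 0) /\
  (forall i j, A i j = 0 <-> A j i = 0).

(* generalized free realization: rows of [alphaM] are the alpha_i (in the dual of A),
   rows of [corM] are the alpha_i^vee (in A); both families linearly
   independent, and alpha_j(alpha_i^vee) = a_{i,j}. *)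
Definition gen_free_realization (R : realFieldType) (n m : nat)
  (A : 'M[int]_n) (alphaM corM : 'M[R]_(n, m)) : Prop :=
  row_free alphaM /\ row_free corM /\
  (forall i j, (corM *m alphaM^T) i j = (A i j)%:~R).

Definition refl_mx (R : realFieldType) (n m : nat) (alphaM corM : 'M[R]_(n, m))
  (i : 'I_n) : 'M[R]_m :=
  1%:M - (row i alphaM)^T *m row i corM.

Inductive in_Wv (R : realFieldType) (n m : nat) (alphaM corM : 'M[R]_(n, m))
  : 'M[R]_m -> Prop :=
| Wv_one : in_Wv alphaM corM 1%:M
| Wv_refl i : in_Wv alphaM corM (refl_mx alphaM corM i)
| Wv_mul w1 w2 : in_Wv alphaM corM w1 -> in_Wv alphaM corM w2 ->
    in_Wv alphaM corM (w1 *m w2)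
| Wv_inv w : in_Wv alphaM corM w -> in_Wv alphaM corM (invmx w).

Definition in_Qv (R : realFieldType) (n m : nat) (corM : 'M[R]_(n, m))
  (v : 'rV[R]_m) : Prop :=
  exists c : 'rV[int]_n, v = map_mx (fun z : int => z%:~R) c *m corM.

(* Every w in W is a product of reflections, and
   r_i maps Q^v into itself, which gives stability. For injectivity, suppose w fixes
   every alpha_i^v and take a reduced expression w = r_i y, so l(r_i y) > l(y). Kac's
   positivity lemma makes alpha_i^v y a nonnegative combination of coroots, whereas
   alpha_i^v = alpha_i^v w = (alpha_i^v r_i) y = - alpha_i^v y; as the coroots are
   free, this forces l(w) = 0. Positivity is proved by induction on the length,
   reducing to the dihedral subgroup <r_i, r_j>, where the coordinates on
   span(alpha_i^v, alpha_j^v) are computed explicitly. Lengths change by exactly one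
   under a reflection since det w = (-1)^l(w). *)

From HB Require Import structures.
From mathcomp Require Import all_boot all_order all_algebra.
From mathcomp Require Import ring lra zify.
Set Implicit Arguments. Unset Strict Implicit. Unset Printing Implicit Defensive.
Import Order.TTheory GRing.Theory Num.Theory.
Local Open Scope ring_scope.

Lemma det1D_rank1 (R : comPzRingType) m (a : 'cV[R]_m) (c : 'rV[R]_m) :
  \det (1%:M + a *m c) = 1 + (c *m a) 0 0.
Proof.
have E1 : block_mx 1%:M (-a) c 1%:M =
    block_mx 1%:M 0 c 1%:M *m block_mx 1%:M (-a) 0 (1%:M + c *m a).
  rewrite mulmx_block; congr block_mx;
    rewrite ?mulmx1 ?mul1mx ?mulmx0 ?mul0mx ?addr0 ?add0r ?mulmxN //.
  by rewrite addrCA addNr addr0.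
have E2 : block_mx 1%:M (-a) c 1%:M =
    block_mx (1%:M + a *m c) (-a) 0 1%:M *m block_mx 1%:M 0 c 1%:M.
  rewrite mulmx_block; congr block_mx;
    by rewrite ?mulmx1 ?mul1mx ?mulmx0 ?mul0mx ?addr0 ?add0r ?mulNmx ?addrK.
have := congr1 determinant E2; rewrite {1}E1 !det_mulmx !det_lblock !det_ublock.
by rewrite !det1 !mul1r !mulr1 det_mx11 => <-; rewrite !mxE eqxx.
Qed.

Fixpoint alt (T : Type) (a b : T) (k : nat) : seq T :=
  if k is k'.+1 then a :: alt b a k' else [::].

Lemma size_alt T (a b : T) k : size (alt a b k) = k.
Proof. by elim: k a b => [|k IH] a b //=; rewrite IH. Qed.

Lemma alt_addn T (a b : T) k l :
  alt a b (k + l) = alt a b k ++ (if odd k then alt b a l else alt a b l).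
Proof. by elim: k a b => [|k IH] a b //=; rewrite IH; case: (odd k). Qed.

Lemma all_alt T (p : pred T) a b k : p a -> p b -> all p (alt a b k).
Proof. by elim: k a b => [|k IH] a b pa pb //=; rewrite pa IH. Qed.

Lemma alternating_word (T : eqType) (w : seq T) a b :
  all (mem [:: a; b]) w -> sorted (fun x y => x != y) w -> ohead w != Some b ->
  w = alt a b (size w).
Proof.
elim: w a b => [|c w IH] a b //= /andP [cab wab] sw hb.
have eca : c = a by move: cab hb; rewrite !inE => /orP [/eqP|/eqP ->] //; rewrite eqxx.
subst c; congr (_ :: _); apply: IH.
- by apply: sub_all wab => k; rewrite !inE orbC.
- exact: path_sorted sw.
- by case: w sw {wab} => //= c w /andP [ac _]; apply: contra ac => /eqP [->].
Qed.

Lemma cartan_rank2_cases (a b : int) : a <= 0 -> b <= 0 -> (a = 0 <-> b = 0) ->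
  a * b < 4 ->
  (a = 0 /\ b = 0) \/ (a = -1 /\ b = -1) \/ (a = -1 /\ b = -2) \/
  (a = -2 /\ b = -1) \/ (a = -1 /\ b = -3) \/ (a = -3 /\ b = -1).
Proof. by move=> ? ? [? ?] ?; nia. Qed.

Section WeylGroup.
Variables (R : realFieldType) (n m : nat) (A : 'M[int]_n).
Variables (alphaM corM : 'M[R]_(n, m)).
Hypothesis cartan_diag : forall i, A i i = 2.
Hypothesis cartan_offdiag : forall i j, i != j -> A i j <= 0.
Hypothesis cartan_zero_sym : forall i j, A i j = 0 <-> A j i = 0.
Hypothesis coroots_free : row_free corM.
Hypothesis pairing : forall i j, (corM *m alphaM^T) i j = (A i j)%:~R.

Local Notation refl := (refl_mx alphaM corM).

Definition coroot i : 'rV[R]_m := row i corM.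
Definition root i (v : 'rV[R]_m) : R := (v *m (row i alphaM)^T) 0 0.

Lemma rootD i u v : root i (u + v) = root i u + root i v.
Proof. by rewrite /root mulmxDl mxE. Qed.

Lemma rootB i u v : root i (u - v) = root i u - root i v.
Proof. by rewrite /root mulmxBl !mxE. Qed.

Lemma rootZ i a v : root i (a *: v) = a * root i v.
Proof. by rewrite /root -scalemxAl mxE. Qed.

Lemma root0 i : root i 0 = 0.
Proof. by rewrite /root mul0mx mxE. Qed.

Lemma root_coroot k i : root i (coroot k) = (A k i)%:~R.
Proof. rewrite /root -pairing !mxE; apply: eq_bigr => l _; by rewrite !mxE. Qed.

Lemma root_coroot_id i : root i (coroot i) = 2.
Proof. by rewrite root_coroot cartan_diag. Qed.

Lemma mul_refl v i : v *m refl i = v - root i v *: coroot i.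
Proof.
by rewrite /refl_mx mulmxBr mulmx1 mulmxA [v *m _]mx11_scalar mul_scalar_mx.
Qed.

Lemma coroot_refl i : coroot i *m refl i = - coroot i.
Proof.
by rewrite mul_refl root_coroot_id scaler_nat mulr2n opprD addrA subrr add0r.
Qed.

Lemma refl_mx_sqr i : refl i *m refl i = 1%:M.
Proof.
apply/eqP/mulmxP => v; rewrite mulmx1 mulmxA !mul_refl rootB rootZ root_coroot_id.
rewrite -addrA -opprD -scalerDl.
have -> : root i v + (root i v - root i v * 2) = 0 by ring.
by rewrite scale0r subr0.
Qed.

Definition wordmx (s : seq 'I_n) : 'M[R]_m := foldr (fun k M => refl k *m M) 1%:M s.

Lemma wordmx_cons k s : wordmx (k :: s) = refl k *m wordmx s.
Proof. by []. Qed.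

Lemma wordmx_cat s t : wordmx (s ++ t) = wordmx s *m wordmx t.
Proof. by elim: s => [|k s IH] /=; rewrite ?mul1mx // IH mulmxA. Qed.

Lemma wordmx_cons2 k s : wordmx (k :: k :: s) = wordmx s.
Proof. by rewrite /= mulmxA refl_mx_sqr mul1mx. Qed.

Lemma wordmx_rev s : wordmx s *m wordmx (rev s) = 1%:M.
Proof.
elim: s => [|k s IH] /=; first by rewrite mulmx1.
rewrite rev_cons -cats1 wordmx_cat /= mulmx1 -mulmxA [wordmx s *m _]mulmxA.
by rewrite IH mul1mx refl_mx_sqr.
Qed.

Lemma wordmx_unit s : wordmx s \in unitmx.
Proof. by case: (mulmx1_unit (wordmx_rev s)). Qed.

Lemma in_Wv_wordmx w : in_Wv alphaM corM w -> exists s, w = wordmx s.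
Proof.
elim=> [|i|_ _ _ [s ->] _ [t ->]|_ _ [s ->]].
- by exists [::].
- by exists [:: i]; rewrite /= mulmx1.
- by exists (s ++ t); rewrite wordmx_cat.
- exists (rev s); have := mulKmx (wordmx_unit s) (wordmx (rev s)).
  by rewrite wordmx_rev mulmx1.
Qed.

Lemma in_Qv_coroot i : in_Qv corM (coroot i).
Proof. by exists (delta_mx 0 i); rewrite map_delta_mx /= -rowE. Qed.

(* r_i sends \sum_k c_k alpha_k^v to itself minus (\sum_k c_k a_{k,i}) alpha_i^v. *)
Lemma in_Qv_refl v i : in_Qv corM v -> in_Qv corM (v *m refl i).
Proof.
case=> c ->; rewrite mul_refl.
exists (c - (c *m A) 0 i *: delta_mx 0 i).
rewrite -[fun z : int => _]/(intmul (1 : R)) map_mxD map_mxN map_mxZ mulmxBl.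
rewrite -scalemxAl map_delta_mx -rowE /root -mulmxA mxE [(c *m A) 0 i]mxE.
rewrite rmorph_sum; congr (_ - _ *: _); apply: eq_bigr => l _.
rewrite !mxE rmorphM /= -pairing !mxE; congr (_ * _); apply: eq_bigr => k _.
by rewrite !mxE.
Qed.

Lemma in_Qv_wordmx v s : in_Qv corM v <-> in_Qv corM (v *m wordmx s).
Proof.
elim: s v => [|k s IH] v /=; first by rewrite mulmx1.
rewrite mulmxA -IH; split; first exact: in_Qv_refl.
by move/(in_Qv_refl k); rewrite -mulmxA refl_mx_sqr mulmx1.
Qed.

Lemma det_refl_mx i : \det (refl i) = -1.
Proof.
rewrite /refl_mx -mulNmx det1D_rank1 mulmxN mxE.
by rewrite -[(_ *m _) 0 0]/(root i (coroot i)) root_coroot_id; lra.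
Qed.

Lemma det_wordmx s : \det (wordmx s) = (-1) ^+ size s.
Proof.
elim: s => [|k s IH] /=; first by rewrite det1.
by rewrite det_mulmx det_refl_mx IH exprS.
Qed.

Definition has_word_of_size s k := [exists t : k.-tuple 'I_n, wordmx t == wordmx s].

Lemma has_word_of_size_exists s : exists k, has_word_of_size s k.
Proof. by exists (size s); apply/existsP; exists (in_tuple s). Qed.

(* The length of the element wordmx s of W, not of the word s. *)
Definition wlen s := ex_minn (has_word_of_size_exists s).

Lemma wlen_min s t : wordmx t = wordmx s -> (wlen s <= size t)%N.
Proof.
move=> ets; rewrite /wlen; case: ex_minnP => k _; apply.
by apply/existsP; exists (in_tuple t); rewrite /= ets.
Qed.

Lemma wlen_size s : (wlen s <= size s)%N.
Proof. exact: wlen_min. Qed.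

Lemma reduced_word_exists s : exists2 t, size t = wlen s & wordmx t = wordmx s.
Proof.
rewrite /wlen; case: ex_minnP => k /existsP [t /eqP ets] _.
by exists t; rewrite ?size_tuple.
Qed.

Lemma eq_wlen s t : wordmx s = wordmx t -> wlen s = wlen t.
Proof.
move=> est; have [s' ss' es] := reduced_word_exists s.
have [t' st' et] := reduced_word_exists t.
apply/eqP; rewrite eqn_leq; apply/andP; split.
  by rewrite -st' wlen_min // et est.
by rewrite -ss' wlen_min // es est.
Qed.

Lemma wlen_cat s t : (wlen (s ++ t) <= wlen s + wlen t)%N.
Proof.
have [s' <- es] := reduced_word_exists s; have [t' <- et] := reduced_word_exists t.
by rewrite -size_cat wlen_min // !wordmx_cat es et.
Qed.

Lemma wlen_cons k s : (wlen (k :: s) <= (wlen s).+1)%N.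
Proof.
by apply: leq_trans (wlen_cat [:: k] s) _; rewrite -add1n leq_add2r wlen_size.
Qed.

Lemma wlen_eq0 s : wlen s = 0%N -> wordmx s = 1%:M.
Proof.
move=> s0; have [t st <-] := reduced_word_exists s.
by case: t st => //; rewrite s0.
Qed.

Lemma wlen_cons_neq k s : wlen (k :: s) != wlen s.
Proof.
have det_wlen t : \det (wordmx t) = (-1) ^+ wlen t.
  by have [t' <- <-] := reduced_word_exists t; rewrite det_wordmx.
apply/eqP => eks; have := det_wlen (k :: s).
rewrite /= det_mulmx det_refl_mx det_wlen eks -signr_odd; clear eks.
by case: odd; rewrite ?expr0 ?expr1 => h; lra.
Qed.

Lemma wlen_cons_descent k s :
  (wlen (k :: s) <= wlen s)%N -> (wlen (k :: s)).+1 = wlen s.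
Proof.
have := wlen_cons k (k :: s); rewrite (eq_wlen (wordmx_cons2 k s)).
have := wlen_cons_neq k s; lia.
Qed.

Lemma wlen_reduced_behead k s : wlen (k :: s) = (size s).+1 -> wlen s = size s.
Proof. by have := wlen_cons k s; have := wlen_size s; lia. Qed.

Lemma wlen_reduced_prefix w y y' :
  wordmx y = wordmx w *m wordmx y' -> (size w + wlen y')%N = wlen y ->
  wlen w = size w.
Proof.
rewrite -wordmx_cat => /eq_wlen ey sy.
by have := wlen_cat w y'; have := wlen_size w; rewrite -ey; lia.
Qed.

Lemma wlen_ascent_prefix w y y' k :
  wordmx y = wordmx w *m wordmx y' -> (size w + wlen y')%N = wlen y ->
  (wlen y < wlen (k :: y))%N -> (size w < wlen (k :: w))%N.
Proof.
move=> ey sy; have -> : wlen (k :: y) = wlen ((k :: w) ++ y').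
  by apply: eq_wlen; rewrite wordmx_cat /= ey mulmxA.
by have := wlen_cat (k :: w) y'; lia.
Qed.

Lemma reduced_sorted_neq s : wlen s = size s -> sorted (fun a b => a != b) s.
Proof.
elim: s => [|a s IH] //; case: s IH => [|b s] IH //= red; apply/andP; split.
  apply/eqP => eab; move: red; rewrite eab (eq_wlen (wordmx_cons2 b s)) /=.
  by have := wlen_size s; lia.
by apply: IH; apply: wlen_reduced_behead red.
Qed.

Definition coroot_cone (v : 'rV[R]_m) :=
  exists2 d : 'rV[R]_n, (forall l, 0 <= d 0 l) & v = d *m corM.

Lemma coroot_cone_coroot i : coroot_cone (coroot i).
Proof. by exists (delta_mx 0 i); [move=> l; rewrite mxE ler0n | rewrite -rowE]. Qed.

Lemma coroot_cone_comb x y u v : 0 <= x -> 0 <= y ->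
  coroot_cone u -> coroot_cone v -> coroot_cone (x *: u + y *: v).
Proof.
move=> x0 y0 [d d0 ->] [e e0 ->]; exists (x *: d + y *: e).
  by move=> l; rewrite !mxE addr_ge0 // mulr_ge0.
by rewrite mulmxDl -!scalemxAl.
Qed.

Lemma opp_coroot_notin_cone i : ~ coroot_cone (- coroot i).
Proof.
case=> d d0 ed; have : (d + delta_mx 0 i) *m corM = 0 *m corM.
  by rewrite mulmxDl -ed -rowE addNr mul0mx.
move/(row_free_inj coroots_free)/matrixP/(_ 0 i); rewrite !mxE !eqxx /=.
by have := d0 i; lra.
Qed.

Section Rank2.
Variables i j : 'I_n.
Hypothesis neq_ij : i != j.

Local Notation P := (- (A i j)%:~R : R).
Local Notation Q := (- (A j i)%:~R : R).

(* Coordinates (x, y) of z + x alpha_i^v + y alpha_j^v, where alpha_i z = alpha_j z = 0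
   (see mul_refl_plane). *)
Definition dihedral_step (k : 'I_n) (xy : R * R) : R * R :=
  if k == i then (Q * xy.2 - xy.1, xy.2) else (xy.1, P * xy.1 - xy.2).

Definition dihedral_run (s : seq 'I_n) (xy : R * R) : R * R :=
  foldl (fun xy k => dihedral_step k xy) xy s.

Lemma dihedral_step_i x y : dihedral_step i (x, y) = (Q * y - x, y).
Proof. by rewrite /dihedral_step eqxx. Qed.

Lemma dihedral_step_j x y : dihedral_step j (x, y) = (x, P * x - y).
Proof. by rewrite /dihedral_step eq_sym (negbTE neq_ij). Qed.

Definition nonneg2 (xy : R * R) := 0 <= xy.1 /\ 0 <= xy.2.

Lemma mul_refl_plane k z x y : k \in [:: i; j] -> root i z = 0 -> root j z = 0 ->
  (z + x *: coroot i + y *: coroot j) *m refl k =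
  z + (dihedral_step k (x, y)).1 *: coroot i + (dihedral_step k (x, y)).2 *: coroot j.
Proof.
have shift_i d : z + x *: coroot i + y *: coroot j - d *: coroot i =
    z + (x - d) *: coroot i + y *: coroot j by rewrite scalerBl !addrA [in LHS]addrAC.
have shift_j d : z + x *: coroot i + y *: coroot j - d *: coroot j =
    z + x *: coroot i + (y - d) *: coroot j by rewrite scalerBl !addrA.
rewrite !inE mul_refl /dihedral_step => /orP [] /eqP -> zi zj.
  rewrite eqxx /= !rootD !rootZ zi root_coroot_id root_coroot shift_i.
  by congr (_ + _ *: _ + _); ring.
rewrite eq_sym (negbTE neq_ij) /= !rootD !rootZ zj root_coroot_id root_coroot shift_j.
by congr (_ + _ + _ *: _); ring.
Qed.

Lemma mul_wordmx_plane s z x y : all (mem [:: i; j]) s ->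
  root i z = 0 -> root j z = 0 ->
  (z + x *: coroot i + y *: coroot j) *m wordmx s =
  z + (dihedral_run s (x, y)).1 *: coroot i + (dihedral_run s (x, y)).2 *: coroot j.
Proof.
elim: s x y => [|k s IH] x y /=; first by rewrite mulmx1.
case/andP=> ks ss zi zj; rewrite mulmxA mul_refl_plane // IH //.
by case: (dihedral_step k (x, y)).
Qed.

Lemma plane_decomposition v : 4 - P * Q != 0 ->
  exists z x y, [/\ v = z + x *: coroot i + y *: coroot j, root i z = 0 & root j z = 0].
Proof.
move=> D0; set a := root i v; set b := root j v.
set x := (2 * a + Q * b) / (4 - P * Q); set y := (2 * b + P * a) / (4 - P * Q).
exists (v - (x *: coroot i + y *: coroot j)), x, y; split.
- by rewrite -addrA subrK.
- rewrite rootB rootD !rootZ root_coroot_id root_coroot -/a /x /y.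
  by move: D0; clearbody a b; move=> D0; field.
- rewrite rootB rootD !rootZ root_coroot_id root_coroot -/b /x /y.
  by move: D0; clearbody a b; move=> D0; field.
Qed.

Lemma dihedral_braid M : 4 - P * Q != 0 ->
  (forall xy, dihedral_run (alt i j M) xy = dihedral_run (alt j i M) xy) ->
  wordmx (alt i j M) = wordmx (alt j i M).
Proof.
move=> D0 braid; apply/eqP/mulmxP => v.
have [z [x [y [-> zi zj]]]] := plane_decomposition v D0.
have ij : i \in [:: i; j] by rewrite !inE eqxx.
have ji : j \in [:: i; j] by rewrite !inE eqxx orbT.
by rewrite !mul_wordmx_plane ?braid ?all_alt.
Qed.

(* The braid relation of length M.+1 shortens i :: w as soon as size w > M. *)
Lemma dihedral_finite M w : 4 - P * Q != 0 ->
  (forall xy, dihedral_run (alt i j M.+1) xy = dihedral_run (alt j i M.+1) xy) ->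
  (forall k, (k <= M)%N -> nonneg2 (dihedral_run (alt j i k) (1, 0))) ->
  w = alt j i (size w) -> (size w < wlen (i :: w))%N ->
  nonneg2 (dihedral_run w (1, 0)).
Proof.
move=> D0 braid short ew asc; rewrite ew; case: (leqP (size w) M) => [|ltMw].
  exact: short.
have braid2 : wordmx (alt i j M.+2) = wordmx (alt j i M).
  rewrite -(wordmx_cons2 i (alt j i M)).
  change (refl i *m wordmx (alt j i M.+1) = refl i *m wordmx (alt i j M.+1)).
  by rewrite (dihedral_braid D0 braid).
have /wlen_min : wordmx (alt j i M ++
    (if odd M.+2 then alt j i (size w - M.+1) else alt i j (size w - M.+1))) =
    wordmx (i :: w).
  by rewrite wordmx_cat -braid2 -wordmx_cat -alt_addn addSn subnKC // {2}ew.
by rewrite size_cat; case: ifP; rewrite !size_alt; lia.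
Qed.

(* For P Q >= 4 the invariant 2 y <= P x (resp. 2 x <= Q y) propagates. *)
Lemma dihedral_infinite k x y : 0 <= P -> 0 <= Q -> 4 <= P * Q ->
  ((0 <= x /\ 0 <= y /\ 2 * y <= P * x) -> nonneg2 (dihedral_run (alt j i k) (x, y))) /\
  ((0 <= x /\ 0 <= y /\ 2 * x <= Q * y) -> nonneg2 (dihedral_run (alt i j k) (x, y))).
Proof.
move=> P0 Q0 PQ4; elim: k x y => [|k IH] x y; first by split => -[x0 [y0 _]].
rewrite /= /dihedral_step eqxx eq_sym (negbTE neq_ij) /=.
split => -[x0 [y0 xy]].
- apply: (IH _ _).2.
  have h1 : 0 <= Q * (P * x - 2 * y) by apply: mulr_ge0 => //; lra.
  have h2 : 0 <= (P * Q - 4) * x by apply: mulr_ge0 => //; lra.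
  split; [lra | split; [lra | nra]].
- apply: (IH _ _).1.
  have h1 : 0 <= P * (Q * y - 2 * x) by apply: mulr_ge0 => //; lra.
  have h2 : 0 <= (P * Q - 4) * y by apply: mulr_ge0 => //; lra.
  split; [lra | split; [lra | nra]].
Qed.

Lemma dihedral_nonneg w : w = alt j i (size w) -> (size w < wlen (i :: w))%N ->
  nonneg2 (dihedral_run w (1, 0)).
Proof.
have neq_ji : (j == i) = false by rewrite eq_sym (negbTE neq_ij).
have Aij := cartan_offdiag neq_ij; have Aji := cartan_offdiag (negbT neq_ji).
have [PQ4|PQ3] := lerP 4 (A i j * A j i).
  move=> ew _; rewrite ew; apply: (dihedral_infinite _ _ _ _ _ _).1.
  - by rewrite oppr_ge0 lerz0.
  - by rewrite oppr_ge0 lerz0.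
  - by rewrite mulrNN -intrM -[4]/(4%:~R) ler_int.
  - have : 0 <= P by rewrite oppr_ge0 lerz0.
    lra.
(* The finite types A1xA1, A2, B2, G2, with braid relations of length 2, 3, 4, 6. *)
case: (cartan_rank2_cases Aij Aji (cartan_zero_sym i j) PQ3)
  => [[e1 e2]|[[e1 e2]|[[e1 e2]|[[e1 e2]|[[e1 e2]|[e1 e2]]]]]];
  [ apply: (@dihedral_finite 1) | apply: (@dihedral_finite 2)
  | apply: (@dihedral_finite 3) | apply: (@dihedral_finite 3)
  | apply: (@dihedral_finite 5) | apply: (@dihedral_finite 5) ].
all: first
  [ by rewrite e1 e2 ?intrN ?opprK ?oppr0 ?mulr1z ?mulrz_nat; apply/eqP; lra
  | by case=> x y; cbn [alt dihedral_run foldl];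
      rewrite ?(dihedral_step_i, dihedral_step_j) e1 e2;
      rewrite ?intrN ?opprK ?oppr0 ?mulr1z ?mulrz_nat; congr pair; ring
  | by case=> [|[|[|[|[|[|k]]]]]] // _; cbn [alt dihedral_run foldl];
      rewrite ?(dihedral_step_i, dihedral_step_j) ?e1 ?e2;
      rewrite ?intrN ?opprK ?oppr0 ?mulr1z ?mulrz_nat /nonneg2 /=; split; lra ].
Qed.

Lemma rank2_ascent_cone w : all (mem [:: i; j]) w -> wlen w = size w ->
  (size w < wlen (i :: w))%N ->
  exists x y, [/\ 0 <= x, 0 <= y & coroot i *m wordmx w = x *: coroot i + y *: coroot j].
Proof.
move=> wij red asc; have ew : w = alt j i (size w).
  apply: alternating_word; last 1 first.
  - case: w {wij red} asc => //= a w; apply: contraTneq => -[->].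
    by rewrite (eq_wlen (wordmx_cons2 i w)) -leqNgt leqW // wlen_size.
  - by apply: sub_all wij => k; rewrite !inE orbC.
  - exact: reduced_sorted_neq.
have [x0 y0] := dihedral_nonneg ew asc.
exists (dihedral_run w (1, 0)).1, (dihedral_run w (1, 0)).2; split=> //.
have := mul_wordmx_plane 1 0 wij (root0 i) (root0 j).
by rewrite add0r scale1r scale0r addr0 add0r.
Qed.

End Rank2.

Lemma dihedral_descent i j y : exists w y', [/\ all (mem [:: i; j]) w,
  wordmx y = wordmx w *m wordmx y', (size w + wlen y')%N = wlen y,
  (wlen y' < wlen (i :: y'))%N & (wlen y' < wlen (j :: y'))%N].
Proof.
move Ek: (wlen y) => k; elim/ltn_ind: k y Ek => k IH y Ek.
have [/hasP [a aij /wlen_cons_descent ey]|] :=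
  boolP (has (fun a => wlen (a :: y) <= wlen y)%N [:: i; j]).
  have [|w [y' [wij ew sw ai aj]]] := IH (wlen (a :: y)) _ (a :: y) erefl.
    by rewrite -Ek -ey.
  exists (a :: w), y'; split=> //=; first by rewrite aij.
    by rewrite -mulmxA -ew /= mulmxA refl_mx_sqr mul1mx.
  by rewrite -Ek -ey -sw addSn.
rewrite /= orbF negb_or -!ltnNge => /andP [iy jy].
by exists [::], y; split; rewrite //= ?mul1mx ?add0n.
Qed.

(* Humphreys, Reflection groups and Coxeter groups, 5.4: write y = w y' with w in
   <r_i, r_j> and y' ascending at i and j; the rank 2 case handles w, induction y'. *)
Lemma coroot_wordmx_cone y i :
  (wlen y < wlen (i :: y))%N -> coroot_cone (coroot i *m wordmx y).
Proof.
move=> asc; move Ek: (wlen y) => k; elim/ltn_ind: k y i Ek asc => k IH y i Ek asc.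
case: k Ek asc IH => [|k] Ek asc IH.
  by rewrite (wlen_eq0 Ek) mulmx1; apply: coroot_cone_coroot.
have [s st es] := reduced_word_exists y.
case: s st es => [|j t]; rewrite Ek // => -[st] et.
have tk : wlen t = k by rewrite -st (@wlen_reduced_behead j) // (eq_wlen et) Ek st.
have jy : wlen (j :: y) = k.
  rewrite -tk -(eq_wlen (wordmx_cons2 j t)); apply: eq_wlen.
  by rewrite wordmx_cons [wordmx (j :: j :: t)]wordmx_cons et.
have neq_ij : i != j by apply: contraTneq asc => ->; rewrite jy Ek -leqNgt leqnSn.
have [w [y' [wij ew sw iy' jy']]] := dihedral_descent i j t.
have ey : wordmx y = wordmx (j :: w) *m wordmx y' by rewrite -et wordmx_cons ew mulmxA.
have sy : (size (j :: w) + wlen y')%N = wlen y by rewrite Ek -tk -sw.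
have jwij : all (mem [:: i; j]) (j :: w) by rewrite /= !inE eqxx orbT.
have y'k : (wlen y' < k.+1)%N by rewrite ltnS -tk -sw leq_addl.
rewrite ey mulmxA.
have [x [z [x0 z0 ->]]] := rank2_ascent_cone neq_ij jwij
  (wlen_reduced_prefix ey sy) (wlen_ascent_prefix ey sy asc).
rewrite mulmxDl -!scalemxAl.
by apply: coroot_cone_comb => //; apply: (IH _ y'k).
Qed.

Lemma fix_coroots_wordmx_eq1 s :
  (forall k, coroot k *m wordmx s = coroot k) -> wordmx s = 1%:M.
Proof.
move=> fixs; case Ek: (wlen s) => [|k]; first exact: wlen_eq0.
have [s' st et] := reduced_word_exists s.
case: s' st et => [|i t]; rewrite Ek // => -[st] et.
have tk : wlen t = k by rewrite -st (@wlen_reduced_behead i) // (eq_wlen et) Ek st.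
have asc : (wlen t < wlen (i :: t))%N by rewrite (eq_wlen et) Ek tk.
have flip : coroot i *m wordmx t = - coroot i.
  by rewrite -[in RHS](fixs i) -et wordmx_cons mulmxA coroot_refl mulNmx opprK.
by have := coroot_wordmx_cone asc; rewrite flip => /opp_coroot_notin_cone.
Qed.

End WeylGroup.

Theorem mainTheorem11 (R : realFieldType) (n m : nat) (A : 'M[int]_n)
  (alphaM corM : 'M[R]_(n, m)) :
  gen_cartan A ->
  gen_free_realization A alphaM corM ->
  (forall w, in_Wv alphaM corM w ->
     w \in unitmx /\
     (forall v : 'rV[R]_m, in_Qv corM v <-> in_Qv corM (v *m w))) /\
  (forall w1 w2, in_Wv alphaM corM w1 -> in_Wv alphaM corM w2 ->
     (forall v : 'rV[R]_m, in_Qv corM v -> v *m w1 = v *m w2) -> w1 = w2).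
Proof.
move=> [diag [offdiag zero_sym]] [_ [free pairing]].
have words := in_Wv_wordmx diag pairing; split.
  move=> w /words [s ->]; split; first exact: (wordmx_unit diag pairing).
  by move=> v; exact: (in_Qv_wordmx diag pairing).
move=> w1 w2 /words [s1 ->] /words [s2 ->] eqQ.
have trivial12 : wordmx alphaM corM (s1 ++ rev s2) = 1%:M.
  apply: (fix_coroots_wordmx_eq1 diag offdiag zero_sym free pairing) => k.
  rewrite wordmx_cat mulmxA eqQ; last exact: in_Qv_coroot.
  by rewrite -mulmxA (wordmx_rev diag pairing) mulmx1.
rewrite -[LHS]mulmx1 -(wordmx_rev diag pairing (rev s2)) revK mulmxA -wordmx_cat.
by rewrite trivial12 mul1mx.
Qed.
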